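(* If $\Gamma\vdash M$ is derivable in $\ell\Lambda_\infty^{4S}$ and $M\to N$, then $\Delta\vdash N$ is derivable in $\ell\Lambda_\infty^{4S}$ for some environment $\Delta$ with $\Gamma\prec\Delta$.
   Context: Preterms are possibly infinite trees generated by $M ::= x \mid MN \mid \lambda x.M \mid \lambda^{\downarrow}x.M \mid \lambda^{\uparrow}x.M \mid \downarrow M \mid \uparrow M$ ($\downarrow M$ inductive box, $\uparrow M$ coinductive box); substitution is capture-avoiding. Patterns are $x,\ \downarrow x,\ \uparrow x,\ \#x,\ \dagger x$; an environment is a finite set of patterns with each variable in at most one pattern; a linear environment is a set of variables, with $\#\Theta,\downarrow\Theta,\uparrow\Theta,\dagger\Theta$ the correspondingly marked sets; commas denote disjoint unions. $\Upsilon,\Pi$ range over environments with only patterns $y$ or $\downarrow y$; $\Theta,\Xi,\Psi,\Phi$ over linear environments. The system $\ell\Lambda_\infty^{4S}$ has rules: (vl) $\#\Theta,\uparrow\Xi,\dagger\Psi,x\vdash x$; (vd) $\#\Theta,\uparrow\Xi,\dagger\Psi,\#x\vdash x$; (va) $\#\Theta,\uparrow\Xi,\dagger\Psi,\dagger x\vdash x$; (a) from $\Upsilon,\#\Theta,\uparrow\Xi,\dagger\Psi\vdash M$ and $\Pi,\#\Theta,\uparrow\Xi,\dagger\Psi\vdash N$ infer $\Upsilon,\Pi,\#\Theta,\uparrow\Xi,\dagger\Psi\vdash MN$; (ll) $\Gamma,x\vdash M$ gives $\Gamma\vdash\lambda x.M$; (li)$_1$ $\Gamma,\#x\vdash M$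 gives $\Gamma\vdash\lambda^\downarrow x.M$; (li)$_2$ $\Gamma,\downarrow x\vdash M$ gives $\Gamma\vdash\lambda^\downarrow x.M$; (lc) $\Gamma,\uparrow x\vdash M$ gives $\Gamma\vdash\lambda^\uparrow x.M$; (mi) from $\Xi,\uparrow\Psi,\dagger\Phi\vdash M$ infer $\#\Theta,\downarrow\Xi,\uparrow\Psi,\dagger\Phi\vdash\downarrow M$; (mc) from $\dagger\Xi,\dagger\Psi\vdash M$ infer $\#\Theta,\uparrow\Xi,\dagger\Psi\vdash\uparrow M$. (mc) is coinductive, others inductive: derivable judgments are roots of possibly infinite derivation trees in which every infinite branch contains infinitely many (mc) instances. $\Gamma\prec\Delta$ means $\Delta$ is obtained from $\Gamma$ by replacing some patterns $\downarrow x$ by $\#x$. Basic reduction: $(\lambda x.M)N\mapsto M[N/x]$, $(\lambda^\downarrow x.M)(\downarrow N)\mapsto M[N/x]$, $(\lambda^\uparrow x.M)(\uparrow N)\mapsto M[N/x]$; $M\to N$ iff $M=C[L]$, $N=C[P]$ with $L\mapsto P$ and $C$ a one-hole context (hole at a finite position). *)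

From Stdlib Require Import Arith.

CoInductive term : Type :=
| Var  : nat -> term
| App  : term -> term -> term
| Lam  : term -> term
| LamI : term -> term          (* lambda^down x. M   *)
| LamC : term -> term          (* lambda^up x. M     *)
| BoxI : term -> term          (* inductive box  (down M) *)
| BoxC : term -> term.         (* coinductive box (up M)  *)

(* equality of (infinite) trees = bisimilarity *)
CoInductive bisim : term -> term -> Prop :=
| bs_var n : bisim (Var n) (Var n)
| bs_app M M' N N' : bisim M M' -> bisim N N' -> bisim (App M N) (App M' N')
| bs_lam M M' : bisim M M' -> bisim (Lam M) (Lam M')
| bs_lamI M M' : bisim M M' -> bisim (LamI M) (LamI M')
| bs_lamC M M' : bisim M M' -> bisim (LamC M) (LamC M')
| bs_boxI M M' : bisim M M' -> bisim (BoxI M) (BoxI M')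
| bs_boxC M M' : bisim M M' -> bisim (BoxC M) (BoxC M').

CoFixpoint lift (c : nat) (M : term) : term :=
  match M with
  | Var n => Var (if n <? c then n else S n)
  | App M1 M2 => App (lift c M1) (lift c M2)
  | Lam M1 => Lam (lift (S c) M1)
  | LamI M1 => LamI (lift (S c) M1)
  | LamC M1 => LamC (lift (S c) M1)
  | BoxI M1 => BoxI (lift c M1)
  | BoxC M1 => BoxC (lift c M1)
  end.

CoFixpoint subst (k : nat) (N : term) (M : term) : term :=
  match M with
  | Var n => if n =? k then N else if k <? n then Var (pred n) else Var n
  | App M1 M2 => App (subst k N M1) (subst k N M2)
  | Lam M1 => Lam (subst (S k) (lift 0 N) M1)
  | LamI M1 => LamI (subst (S k) (lift 0 N) M1)
  | LamC M1 => LamC (subst (S k) (lift 0 N) M1)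
  | BoxI M1 => BoxI (subst k N M1)
  | BoxC M1 => BoxC (subst k N M1)
  end.

Inductive basic : term -> term -> Prop :=
| b_beta M N : basic (App (Lam M) N) (subst 0 N M)
| b_betaI M N : basic (App (LamI M) (BoxI N)) (subst 0 N M)
| b_betaC M N : basic (App (LamC M) (BoxC N)) (subst 0 N M).

(* one-hole contexts, hole at a finite position *)
Inductive ctx : Type :=
| Hole : ctx
| CAppL : ctx -> term -> ctx
| CAppR : term -> ctx -> ctx
| CLam : ctx -> ctx
| CLamI : ctx -> ctx
| CLamC : ctx -> ctx
| CBoxI : ctx -> ctx
| CBoxC : ctx -> ctx.

Fixpoint plug (C : ctx) (L : term) : term :=
  match C with
  | Hole => L
  | CAppL C1 N => App (plug C1 L) N
  | CAppR M C1 => App M (plug C1 L)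
  | CLam C1 => Lam (plug C1 L)
  | CLamI C1 => LamI (plug C1 L)
  | CLamC C1 => LamC (plug C1 L)
  | CBoxI C1 => BoxI (plug C1 L)
  | CBoxC C1 => BoxC (plug C1 L)
  end.

Definition red (M N : term) : Prop :=
  exists C L P, basic L P /\ bisim M (plug C L) /\ bisim N (plug C P).

(* pattern kinds:  x, down x, up x, #x, dagger x *)
Inductive kind : Type := KVar | KDown | KUp | KHash | KDag.

Definition env := nat -> option kind.

Definition env_finite (G : env) : Prop := exists n, forall i, n <= i -> G i = None.

Definition ext (p : option kind) (G : env) : env :=
  fun i => match i with 0 => p | S j => G j end.

(* patterns allowed in  #Theta, up Xi, dagger Psi *)
Definition lin_ok (o : option kind) : Prop :=
  o = None \/ o = Some KHash \/ o = Some KUp \/ o = Some KDag.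

(* G = Upsilon,Pi,#Theta,upXi,daggerPsi ; G1 = Upsilon,#Theta,..., G2 = Pi,#Theta,... *)
Definition app_split (G G1 G2 : env) : Prop :=
  forall i, match G i with
            | None => G1 i = None /\ G2 i = None
            | Some KVar => (G1 i = Some KVar /\ G2 i = None) \/ (G1 i = None /\ G2 i = Some KVar)
            | Some KDown => (G1 i = Some KDown /\ G2 i = None) \/ (G1 i = None /\ G2 i = Some KDown)
            | Some k => G1 i = Some k /\ G2 i = Some k
            end.

(* G = #Theta, down Xi, up Psi, dagger Phi ;  G' = Xi, up Psi, dagger Phi *)
Definition mi_env (G G' : env) : Prop :=
  forall i, match G i with
            | None => G' i = None
            | Some KHash => G' i = None
            | Some KDown => G' i = Some KVar
            | Some KUp => G' i = Some KUp
            | Some KDag => G' i = Some KDag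
            | Some KVar => False
            end.

(* G = #Theta, up Xi, dagger Psi ;  G' = dagger Xi, dagger Psi *)
Definition mc_env (G G' : env) : Prop :=
  forall i, match G i with
            | None => G' i = None
            | Some KHash => G' i = None
            | Some KUp => G' i = Some KDag
            | Some KDag => G' i = Some KDag
            | Some KVar => False
            | Some KDown => False
            end.

(* One layer of rules: all rules inductive (premises in derI X), except (mc),
   whose premise is taken from X (the coinductive hypothesis). *)
Inductive derI (X : env -> term -> Prop) : env -> term -> Prop :=
| d_vl G x : G x = Some KVar -> (forall y, y <> x -> lin_ok (G y)) -> derI X G (Var x)
| d_vd G x : G x = Some KHash -> (forall y, y <> x -> lin_ok (G y)) -> derI X G (Var x)
| d_va G x : G x = Some KDag -> (forall y, y <> x -> lin_ok (G y)) -> derI X G (Var x)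
| d_a G G1 G2 M N : app_split G G1 G2 -> derI X G1 M -> derI X G2 N -> derI X G (App M N)
| d_ll G M : derI X (ext (Some KVar) G) M -> derI X G (Lam M)
| d_li1 G M : derI X (ext (Some KHash) G) M -> derI X G (LamI M)
| d_li2 G M : derI X (ext (Some KDown) G) M -> derI X G (LamI M)
| d_lc G M : derI X (ext (Some KUp) G) M -> derI X G (LamC M)
| d_mi G G' M : mi_env G G' -> derI X G' M -> derI X G (BoxI M)
| d_mc G G' M : mc_env G G' -> X G' M -> derI X G (BoxC M).

(* Derivable = greatest fixed point  nu X. mu Y. F(X,Y): derivation trees whose
   infinite branches all contain infinitely many (mc) instances. *)
Definition der (G : env) (M : term) : Prop :=
  exists X : env -> term -> Prop, (forall G' M', X G' M' -> derI X G' M') /\ X G M.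

Definition env_prec (G D : env) : Prop :=
  forall i, D i = G i \/ (G i = Some KDown /\ D i = Some KHash).

(** It suffices to treat a redex at the root and then to carry the result
    through the one-hole context.

    At the root each β-rule is a substitution lemma, one per pattern of the bound
    variable.  A linear [x] occurs exactly once, so the environment of the
    argument is merged into the single place where [x] is used.  A variable [#x]
    may be used many times, but its argument [↓N] was typed under [↓]-patterns
    that became plain variables inside the box; turning them into [#]-patterns
    makes the argument duplicable, and this is the only source of [Γ ≺ Δ].  The
    variables [↑x] and [†x] are only used under coinductive boxes, where the
    argument [↑N] is typed with [†]-patterns only, so that substitution is a
    coinductive construction.

    In a context, a [≺]-step performed in one premise of an application is
    copied to the other premise by weakening, since [#]-patterns are shared;
    under a box no [↓]-pattern survives, so no change of environment is needed. *)

From Stdlib Require Import Arith Lia FunctionalExtensionality.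

Definition term_unfold (t : term) : term :=
  match t with
  | Var n => Var n
  | App a b => App a b
  | Lam a => Lam a
  | LamI a => LamI a
  | LamC a => LamC a
  | BoxI a => BoxI a
  | BoxC a => BoxC a
  end.

Lemma term_unfold_eq t : t = term_unfold t.
Proof. now destruct t. Qed.

Ltac unfold_cofix t := rewrite (term_unfold_eq t); reflexivity.

Lemma subst_Var k N n :
  subst k N (Var n) = if n =? k then N else if k <? n then Var (pred n) else Var n.
Proof.
  rewrite (term_unfold_eq (subst k N (Var n))); simpl.
  destruct (n =? k); [destruct N | destruct (k <? n)]; reflexivity.
Qed.
Lemma subst_App k N a b : subst k N (App a b) = App (subst k N a) (subst k N b).
Proof. unfold_cofix (subst k N (App a b)). Qed.
Lemma subst_Lam k N a : subst k N (Lam a) = Lam (subst (S k) (lift 0 N) a).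
Proof. unfold_cofix (subst k N (Lam a)). Qed.
Lemma subst_LamI k N a : subst k N (LamI a) = LamI (subst (S k) (lift 0 N) a).
Proof. unfold_cofix (subst k N (LamI a)). Qed.
Lemma subst_LamC k N a : subst k N (LamC a) = LamC (subst (S k) (lift 0 N) a).
Proof. unfold_cofix (subst k N (LamC a)). Qed.
Lemma subst_BoxI k N a : subst k N (BoxI a) = BoxI (subst k N a).
Proof. unfold_cofix (subst k N (BoxI a)). Qed.
Lemma subst_BoxC k N a : subst k N (BoxC a) = BoxC (subst k N a).
Proof. unfold_cofix (subst k N (BoxC a)). Qed.

Lemma lift_Var c n : lift c (Var n) = Var (if n <? c then n else S n).
Proof. unfold_cofix (lift c (Var n)). Qed.
Lemma lift_App c a b : lift c (App a b) = App (lift c a) (lift c b).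
Proof. unfold_cofix (lift c (App a b)). Qed.
Lemma lift_Lam c a : lift c (Lam a) = Lam (lift (S c) a).
Proof. unfold_cofix (lift c (Lam a)). Qed.
Lemma lift_LamI c a : lift c (LamI a) = LamI (lift (S c) a).
Proof. unfold_cofix (lift c (LamI a)). Qed.
Lemma lift_LamC c a : lift c (LamC a) = LamC (lift (S c) a).
Proof. unfold_cofix (lift c (LamC a)). Qed.
Lemma lift_BoxI c a : lift c (BoxI a) = BoxI (lift c a).
Proof. unfold_cofix (lift c (BoxI a)). Qed.
Lemma lift_BoxC c a : lift c (BoxC a) = BoxC (lift c a).
Proof. unfold_cofix (lift c (BoxC a)). Qed.

Lemma bisim_sym M N : bisim M N -> bisim N M.
Proof. revert M N; cofix CH; intros M N []; constructor; apply CH; assumption. Qed.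

(** * Derivability as a greatest fixed point *)

Lemma derI_mono (X Y : env -> term -> Prop) G M :
  (forall G M, X G M -> Y G M) -> derI X G M -> derI Y G M.
Proof.
  intros HXY H; induction H.
  - eapply d_vl; eauto.
  - eapply d_vd; eauto.
  - eapply d_va; eauto.
  - eapply d_a; eauto.
  - eapply d_ll; eauto.
  - eapply d_li1; eauto.
  - eapply d_li2; eauto.
  - eapply d_lc; eauto.
  - eapply d_mi; eauto.
  - eapply d_mc; eauto.
Qed.

Lemma der_unfold G M : der G M -> derI der G M.
Proof.
  intros [X [HX HG]]. apply derI_mono with X; auto.
  intros G' M' H. exists X; auto.
Qed.

Lemma der_fold G M : derI der G M -> der G M.
Proof.
  intros H. exists (derI der); split; auto.
  intros G' M' H'. apply derI_mono with der; auto. apply der_unfold.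
Qed.

Lemma der_coind (X : env -> term -> Prop) :
  (forall G M, X G M -> derI (fun G M => X G M \/ der G M) G M) ->
  forall G M, X G M -> der G M.
Proof.
  intros HX G M H. exists (fun G M => X G M \/ der G M); split; auto.
  intros G' M' [H' | H']; auto.
  apply derI_mono with der; auto. apply der_unfold; auto.
Qed.

Lemma der_bisim G M M' : der G M -> bisim M M' -> der G M'.
Proof.
  intros H B.
  apply der_coind with (X := fun G M' => exists M, bisim M M' /\ der G M); eauto.
  clear. intros G M' [M [B H]]. apply der_unfold in H.
  revert M' B; induction H; intros M' B; inversion B; subst.
  - eapply d_vl; eauto.
  - eapply d_vd; eauto.
  - eapply d_va; eauto.
  - eapply d_a; eauto.
  - eapply d_ll; eauto.
  - eapply d_li1; eauto.
  - eapply d_li2; eauto.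
  - eapply d_lc; eauto.
  - eapply d_mi; eauto.
  - eapply d_mc; eauto.
Qed.

(** [app_split G G1 G2] is convertible to [forall i, split_at (G i) (G1 i) (G2 i)],
    and [mi_env]/[mc_env] are graphs of the pointwise maps [mi_pat]/[mc_pat]. *)
Definition split_at (e a b : option kind) : Prop :=
  match e with
  | None => a = None /\ b = None
  | Some KVar => (a = Some KVar /\ b = None) \/ (a = None /\ b = Some KVar)
  | Some KDown => (a = Some KDown /\ b = None) \/ (a = None /\ b = Some KDown)
  | Some k => a = Some k /\ b = Some k
  end.

Definition mi_pat (o : option kind) : option kind :=
  match o with Some KHash => None | Some KDown => Some KVar | o => o end.
Definition mc_pat (o : option kind) : option kind :=
  match o with Some KHash => None | Some KUp => Some KDag | o => o end.
Definition mi_env_of (G : env) : env := fun i => mi_pat (G i).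
Definition mc_env_of (G : env) : env := fun i => mc_pat (G i).

Lemma mi_env_inv G G' :
  mi_env G G' -> G' = mi_env_of G /\ (forall i, G i <> Some KVar).
Proof.
  intros H; split.
  - apply functional_extensionality; intro i; specialize (H i); unfold mi_env_of.
    destruct (G i) as [[]|]; simpl in *; tauto.
  - intros i Hi; specialize (H i); rewrite Hi in H; auto.
Qed.

Lemma mi_env_intro G : (forall i, G i <> Some KVar) -> mi_env G (mi_env_of G).
Proof. intros H i; specialize (H i); unfold mi_env_of; destruct (G i) as [[]|]; simpl; auto. Qed.

Lemma mc_env_inv G G' :
  mc_env G G' -> G' = mc_env_of G /\ (forall i, G i <> Some KVar /\ G i <> Some KDown).
Proof.
  intros H; split.
  - apply functional_extensionality; intro i; specialize (H i); unfold mc_env_of.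
    destruct (G i) as [[]|]; simpl in *; tauto.
  - intro i; specialize (H i); destruct (G i) as [[]|]; split; congruence.
Qed.

Lemma mc_env_intro G :
  (forall i, G i <> Some KVar /\ G i <> Some KDown) -> mc_env G (mc_env_of G).
Proof. intros H i; specialize (H i); unfold mc_env_of; destruct (G i) as [[]|]; simpl; firstorder. Qed.

Ltac pattern_cases :=
  let clean := repeat (match goal with
    | H : _ /\ _ |- _ => destruct H
    | H : _ \/ _ |- _ => destruct H
    | H : ?x = _ |- _ => is_var x; subst x
    | H : _ = ?x |- _ => is_var x; subst x
    | H : Some _ = Some _ |- _ => injection H; clear H; intros
    end; simpl in *); try discriminate in
  intros; unfold lin_ok in *; simpl in *; clean;
  repeat (match goal with
          | x : option kind |- _ => destruct x as [[]|]; simpl in *; clean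
          | x : kind |- _ => destruct x; simpl in *; clean
          end);
  firstorder (try discriminate; try congruence).

Definition insert (k : nat) (o : option kind) (G : env) : env :=
  fun i => if i <? k then G i else if i =? k then o else G (pred i).
Definition bump (k y : nat) : nat := if y <? k then y else S y.
Definition remove (k : nat) (G : env) : env := fun y => G (bump k y).

Lemma insert_bump k o G y : insert k o G (bump k y) = G y.
Proof.
  unfold insert, bump.
  destruct (Nat.ltb_spec y k); [now rewrite (proj2 (Nat.ltb_lt y k)) |].
  destruct (Nat.ltb_spec (S y) k); [lia |].
  destruct (Nat.eqb_spec (S y) k); [lia | reflexivity].
Qed.

Lemma insert_at k o G : insert k o G k = o.
Proof. unfold insert. now rewrite Nat.ltb_irrefl, Nat.eqb_refl. Qed.

Lemma insert_remove k G : G = insert k (G k) (remove k G).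
Proof.
  apply functional_extensionality; intro i. unfold insert, remove, bump.
  destruct (Nat.ltb_spec i k); auto.
  destruct (Nat.eqb_spec i k); [now subst |].
  destruct (Nat.ltb_spec (pred i) k); [lia |]. f_equal; lia.
Qed.

Lemma insert0 o G : insert 0 o G = ext o G.
Proof. apply functional_extensionality; now intros []. Qed.

Lemma ext_insert q k o G : ext q (insert k o G) = insert (S k) o (ext q G).
Proof.
  apply functional_extensionality; intros [|i]; [reflexivity |]. unfold insert; simpl.
  change (S i <? S k) with (i <? k).
  destruct (Nat.ltb_spec i k); auto.
  destruct (Nat.eqb_spec i k); auto.
  destruct i; [lia | reflexivity].
Qed.

Lemma mi_env_of_insert k o G : mi_env_of (insert k o G) = insert k (mi_pat o) (mi_env_of G).
Proof.
  apply functional_extensionality; intro i; unfold mi_env_of, insert.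
  destruct (i <? k); auto. destruct (i =? k); auto.
Qed.

Lemma mc_env_of_insert k o G : mc_env_of (insert k o G) = insert k (mc_pat o) (mc_env_of G).
Proof.
  apply functional_extensionality; intro i; unfold mc_env_of, insert.
  destruct (i <? k); auto. destruct (i =? k); auto.
Qed.

Lemma bump_cases k i : i = k \/ exists y, i = bump k y.
Proof.
  unfold bump. destruct (Nat.lt_trichotomy i k) as [H | [H | H]]; auto.
  - right; exists i. now rewrite (proj2 (Nat.ltb_lt i k) H).
  - right; exists (pred i). destruct (Nat.ltb_spec (pred i) k); lia.
Qed.

Lemma bump_neq k y : bump k y <> k.
Proof. unfold bump; destruct (Nat.ltb_spec y k); lia. Qed.

Lemma bump_inj k y z : bump k y = bump k z -> y = z.
Proof. unfold bump; destruct (Nat.ltb_spec y k), (Nat.ltb_spec z k); lia. Qed.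

Lemma app_split_insert k o G G1 G2 :
  app_split (insert k o G) G1 G2 ->
  app_split G (remove k G1) (remove k G2) /\ split_at o (G1 k) (G2 k).
Proof.
  intros H; split.
  - intro y; specialize (H (bump k y)); now rewrite insert_bump in H.
  - specialize (H k); now rewrite insert_at in H.
Qed.

Lemma lin_ok_remove k p E y :
  (forall z, z <> bump k y -> lin_ok (insert k p E z)) -> forall z, z <> y -> lin_ok (E z).
Proof.
  intros H z Hz. rewrite <- (insert_bump k p E z).
  apply H. intro HH; apply bump_inj in HH; auto.
Qed.

Lemma lin_ok_remove_at k p E :
  (forall z, z <> k -> lin_ok (insert k p E z)) -> forall z, lin_ok (E z).
Proof. intros H z. rewrite <- (insert_bump k p E z). apply H, bump_neq. Qed.

Lemma subst_Var_bump k N y : subst k N (Var (bump k y)) = Var y.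
Proof.
  rewrite subst_Var. unfold bump. destruct (Nat.ltb_spec y k).
  - destruct (Nat.eqb_spec y k); [lia |]. destruct (Nat.ltb_spec k y); [lia | auto].
  - destruct (Nat.eqb_spec (S y) k); [lia |]. destruct (Nat.ltb_spec k (S y)); [auto | lia].
Qed.

Lemma subst_Var_at k N : subst k N (Var k) = N.
Proof. now rewrite subst_Var, Nat.eqb_refl. Qed.

(** * Weakening and lifting *)

Definition wk_pat (a b : option kind) : Prop :=
  b = a \/ (a = None /\ lin_ok b) \/ (a = Some KVar /\ b = Some KHash).
Definition env_wk (G G' : env) : Prop := forall i, wk_pat (G i) (G' i).

Definition pattern_eq_dec (a b : option kind) : {a = b} + {a <> b}.
Proof. decide equality. decide equality. Defined.

(** A changed pattern is never linear, so it can be sent to both premises. *)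
Definition wk_select (g g' g1 : option kind) : option kind :=
  if pattern_eq_dec g' g then g1 else g'.

Lemma split_at_wk g g' g1 g2 :
  split_at g g1 g2 -> wk_pat g g' ->
  split_at g' (wk_select g g' g1) (wk_select g g' g2)
  /\ wk_pat g1 (wk_select g g' g1) /\ wk_pat g2 (wk_select g g' g2).
Proof.
  unfold wk_select, wk_pat, lin_ok. destruct (pattern_eq_dec g' g); [subst; intuition |].
  intros A [W | [W | W]]; [congruence | |]; pattern_cases.
Qed.

Lemma lin_ok_wk a b : lin_ok a -> wk_pat a b -> lin_ok b.
Proof. unfold wk_pat; pattern_cases. Qed.
Lemma wk_pat_mi a b : a <> Some KVar -> wk_pat a b -> wk_pat (mi_pat a) (mi_pat b) /\ b <> Some KVar.
Proof. unfold wk_pat; pattern_cases. Qed.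
Lemma wk_pat_mc a b :
  a <> Some KVar /\ a <> Some KDown -> wk_pat a b ->
  wk_pat (mc_pat a) (mc_pat b) /\ b <> Some KVar /\ b <> Some KDown.
Proof. unfold wk_pat; pattern_cases. Qed.

Lemma der_wk G Gw M : der G M -> env_wk G Gw -> der Gw M.
Proof.
  intros H W.
  apply der_coind with (X := fun Gw M => exists G, env_wk G Gw /\ der G M); eauto.
  clear. intros Gw M [G [W H]]. apply der_unfold in H.
  revert Gw W; induction H; intros Gw W.
  - destruct (W x) as [E | [[E _] | [_ E]]]; try congruence.
    + apply d_vl; [congruence |]. intros y Hy; eapply lin_ok_wk; eauto.
    + apply d_vd; auto. intros y Hy; eapply lin_ok_wk; eauto.
  - destruct (W x) as [E | [[E _] | [E _]]]; try congruence.
    apply d_vd; [congruence |]. intros y Hy; eapply lin_ok_wk; eauto.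
  - destruct (W x) as [E | [[E _] | [E _]]]; try congruence.
    apply d_va; [congruence |]. intros y Hy; eapply lin_ok_wk; eauto.
  - pose proof (fun i => split_at_wk _ _ _ _ (H i) (W i)) as HS.
    apply d_a with (fun i => wk_select (G i) (Gw i) (G1 i))
                   (fun i => wk_select (G i) (Gw i) (G2 i)).
    + intro i; apply HS.
    + apply IHderI1; intro i; apply HS.
    + apply IHderI2; intro i; apply HS.
  - apply d_ll, IHderI. intros [|i]; [now left | apply W].
  - apply d_li1, IHderI. intros [|i]; [now left | apply W].
  - apply d_li2, IHderI. intros [|i]; [now left | apply W].
  - apply d_lc, IHderI. intros [|i]; [now left | apply W].
  - apply mi_env_inv in H as [-> H].
    pose proof (fun i => wk_pat_mi _ _ (H i) (W i)) as HW.
    apply d_mi with (mi_env_of Gw).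
    + apply mi_env_intro; intro i; apply HW.
    + apply IHderI; intro i; apply HW.
  - apply mc_env_inv in H as [-> H].
    pose proof (fun i => wk_pat_mc _ _ (H i) (W i)) as HW.
    apply d_mc with (mc_env_of Gw).
    + apply mc_env_intro; intro i; apply HW.
    + left. exists (mc_env_of G); split; auto. intro i; apply HW.
Qed.

Lemma lin_ok_insert_None c x G :
  (forall y, y <> x -> lin_ok (G y)) -> forall y, y <> bump c x -> lin_ok (insert c None G y).
Proof.
  intros Hx y Hy. destruct (bump_cases c y) as [-> | [z ->]].
  - rewrite insert_at; now left.
  - rewrite insert_bump. apply Hx. now intros ->.
Qed.

Lemma der_lift c G M : der G M -> der (insert c None G) (lift c M).
Proof.
  intros H.
  apply der_coind
    with (X := fun G' M' => exists c G M, G' = insert c None G /\ M' = lift c M /\ der G M);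
    [| eauto 10].
  clear. intros G' M' [c [G [M [-> [-> H]]]]]. apply der_unfold in H.
  revert c; induction H; intro c;
    try (rewrite lift_Var; change (if x <? c then x else S x) with (bump c x)).
  - apply d_vl; [now rewrite insert_bump | now apply lin_ok_insert_None].
  - apply d_vd; [now rewrite insert_bump | now apply lin_ok_insert_None].
  - apply d_va; [now rewrite insert_bump | now apply lin_ok_insert_None].
  - rewrite lift_App. apply d_a with (insert c None G1) (insert c None G2); auto.
    intro i. destruct (bump_cases c i) as [-> | [z ->]].
    + rewrite !insert_at; simpl; auto.
    + rewrite !insert_bump. apply H.
  - rewrite lift_Lam. apply d_ll. rewrite ext_insert. apply IHderI.
  - rewrite lift_LamI. apply d_li1. rewrite ext_insert. apply IHderI.
  - rewrite lift_LamI. apply d_li2. rewrite ext_insert. apply IHderI.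
  - rewrite lift_LamC. apply d_lc. rewrite ext_insert. apply IHderI.
  - rewrite lift_BoxI. apply mi_env_inv in H as [-> H].
    apply d_mi with (mi_env_of (insert c None G)).
    + apply mi_env_intro. intro i. destruct (bump_cases c i) as [-> | [z ->]].
      * rewrite insert_at; congruence.
      * rewrite insert_bump; auto.
    + rewrite mi_env_of_insert. apply IHderI.
  - rewrite lift_BoxC. apply mc_env_inv in H as [-> H].
    apply d_mc with (mc_env_of (insert c None G)).
    + apply mc_env_intro. intro i. destruct (bump_cases c i) as [-> | [z ->]].
      * rewrite insert_at; split; congruence.
      * rewrite insert_bump; auto.
    + rewrite mc_env_of_insert. left. exists c, (mc_env_of G), M; auto.
Qed.

Lemma der_lift0 G M : der G M -> der (ext None G) (lift 0 M).
Proof. rewrite <- insert0; apply der_lift. Qed.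

(** * Substitution *)

Definition shared_pat (p : option kind) : Prop := p = None \/ p = Some KUp \/ p = Some KDag.

(** Where the argument carries [†y], the body must carry [†y], or [↑y] as long as the
    substituted variable is still [↑x]: both become [†y] under the next (mc). *)
Definition dag_covered (p o : option kind) : Prop :=
  o = Some KDag \/ (p = Some KUp /\ o = Some KUp).
Definition dag_env (p : option kind) (Gd E : env) : Prop :=
  forall i, Gd i = None \/ (Gd i = Some KDag /\ dag_covered p (E i)).

Lemma dag_covered_split p e a b : dag_covered p e -> split_at e a b -> dag_covered p a /\ dag_covered p b.
Proof. unfold dag_covered; pattern_cases. Qed.
Lemma shared_pat_split p a b : shared_pat p -> split_at p a b -> a = p /\ b = p.
Proof. unfold shared_pat; pattern_cases. Qed.
Lemma dag_covered_mi p e : dag_covered p e -> dag_covered p (mi_pat e).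
Proof. unfold dag_covered; pattern_cases. Qed.
Lemma dag_covered_mc p e : dag_covered p e -> dag_covered (mc_pat p) (mc_pat e).
Proof. unfold dag_covered; pattern_cases. Qed.
Lemma shared_pat_mi p : shared_pat p -> mi_pat p = p.
Proof. unfold shared_pat; pattern_cases. Qed.
Lemma shared_pat_mc p : shared_pat p -> shared_pat (mc_pat p) /\ (mc_pat p <> None -> p <> None).
Proof. unfold shared_pat; pattern_cases. Qed.

Lemma dag_env_remove p Gd E G1 G2 :
  dag_env p Gd E -> app_split E G1 G2 -> dag_env p Gd G1 /\ dag_env p Gd G2.
Proof.
  intros HGd HS; split; intro i; destruct (HGd i) as [Hi | [Hi Ho]]; auto;
    right; split; auto; apply (dag_covered_split _ _ _ _ Ho (HS i)).
Qed.

Lemma dag_env_mi p Gd E : dag_env p Gd E -> dag_env p Gd (mi_env_of E).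
Proof.
  intros H i; destruct (H i) as [Hi | [Hi Ho]]; auto. right; split; auto. now apply dag_covered_mi.
Qed.

Lemma dag_env_mc p Gd E : dag_env p Gd E -> dag_env (mc_pat p) Gd (mc_env_of E).
Proof.
  intros H i; destruct (H i) as [Hi | [Hi Ho]]; auto. right; split; auto. now apply dag_covered_mc.
Qed.

Lemma dag_env_ext p Gd E q : dag_env p Gd E -> dag_env p (ext None Gd) (ext q E).
Proof. intros H [|i]; simpl; auto. Qed.

Lemma der_dag_env E Gd N k :
  (forall z, z <> k -> lin_ok (insert k (Some KDag) E z)) ->
  dag_env (Some KDag) Gd E -> der Gd N -> der E N.
Proof.
  intros Hlin HGd HN. apply der_wk with Gd; auto.
  intro i. destruct (HGd i) as [-> | [-> Ho]].
  - right; left; split; auto. apply (lin_ok_remove_at k (Some KDag) E Hlin).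
  - left. destruct Ho as [-> | [? _]]; congruence.
Qed.

Lemma der_subst_shared k p E M Gd N :
  der (insert k p E) M -> shared_pat p -> (p <> None -> der Gd N) -> dag_env p Gd E ->
  der E (subst k N M).
Proof.
  intros H1 H2 H3 H4.
  apply der_coind with (X := fun E M' => exists k p M Gd N,
    M' = subst k N M /\ der (insert k p E) M /\ shared_pat p /\
    (p <> None -> der Gd N) /\ dag_env p Gd E); [| eauto 12].
  clear. intros E M' [k [p [M [Gd [Q [-> [H [Hp [HN HGd]]]]]]]]].
  apply der_unfold in H. remember (insert k p E) as Gm eqn:HG.
  revert k p E Gd Q HG Hp HN HGd; induction H; intros k p E Gd Q HG Hp HN HGd; subst G.
  - destruct (bump_cases k x) as [-> | [y ->]].
    + rewrite insert_at in H. unfold shared_pat in Hp; intuition congruence.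
    + rewrite subst_Var_bump, insert_bump in *. apply d_vl; auto. eapply lin_ok_remove; eauto.
  - destruct (bump_cases k x) as [-> | [y ->]].
    + rewrite insert_at in H. unfold shared_pat in Hp; intuition congruence.
    + rewrite subst_Var_bump, insert_bump in *. apply d_vd; auto. eapply lin_ok_remove; eauto.
  - destruct (bump_cases k x) as [-> | [y ->]].
    + rewrite insert_at in H. subst p. rewrite subst_Var_at.
      apply derI_mono with der; auto. apply der_unfold.
      apply der_dag_env with Gd k; auto. apply HN; congruence.
    + rewrite subst_Var_bump, insert_bump in *. apply d_va; auto. eapply lin_ok_remove; eauto.
  - rewrite subst_App. apply app_split_insert in H as [Hs Hk].
    destruct (shared_pat_split _ _ _ Hp Hk) as [Hk1 Hk2].
    destruct (dag_env_remove _ _ _ _ _ HGd Hs).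
    apply d_a with (remove k G1) (remove k G2); auto.
    + eapply IHderI1; eauto. rewrite <- Hk1; apply insert_remove.
    + eapply IHderI2; eauto. rewrite <- Hk2; apply insert_remove.
  - rewrite subst_Lam. apply d_ll.
    eapply IHderI; eauto using ext_insert, der_lift0, dag_env_ext.
  - rewrite subst_LamI. apply d_li1.
    eapply IHderI; eauto using ext_insert, der_lift0, dag_env_ext.
  - rewrite subst_LamI. apply d_li2.
    eapply IHderI; eauto using ext_insert, der_lift0, dag_env_ext.
  - rewrite subst_LamC. apply d_lc.
    eapply IHderI; eauto using ext_insert, der_lift0, dag_env_ext.
  - rewrite subst_BoxI. apply mi_env_inv in H as [-> H].
    apply d_mi with (mi_env_of E).
    + apply mi_env_intro. intro i; rewrite <- (insert_bump k p E i); auto.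
    + eapply IHderI; eauto using dag_env_mi.
      rewrite mi_env_of_insert, shared_pat_mi; auto.
  - rewrite subst_BoxC. apply mc_env_inv in H as [-> H].
    destruct (shared_pat_mc p Hp) as [Hp1 Hp2].
    apply d_mc with (mc_env_of E).
    + apply mc_env_intro. intro i; rewrite <- (insert_bump k p E i); auto.
    + left. exists k, (mc_pat p), M, Gd, Q.
      repeat split; auto using dag_env_mc. now rewrite <- mc_env_of_insert.
Qed.

Lemma der_strengthen k E M N : der (insert k None E) M -> der E (subst k N M).
Proof.
  intros H. apply der_subst_shared with None (fun _ => None); auto.
  - now left.
  - congruence.
  - intro; now left.
Qed.

Definition merge_pat (n a : option kind) : option kind :=
  match n with None => a | o => o end.

Lemma split_at_merge_l e r n a b :
  split_at e r n -> split_at r a b -> split_at (merge_pat n a) a n /\ split_at e (merge_pat n a) b.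
Proof. unfold merge_pat; pattern_cases. Qed.
Lemma split_at_merge_r e r n a b :
  split_at e r n -> split_at r a b -> split_at (merge_pat n b) b n /\ split_at e a (merge_pat n b).
Proof. unfold merge_pat; pattern_cases. Qed.
Lemma split_at_wk_arg e r n : split_at e r n -> lin_ok r -> wk_pat n e.
Proof. unfold wk_pat; pattern_cases. Qed.
Lemma split_at_linear o a b :
  split_at (Some o) a b -> o = KVar \/ o = KDown ->
  (a = Some o /\ b = None) \/ (a = None /\ b = Some o).
Proof. pattern_cases. Qed.

(** Under a binder of pattern [q], the lifted argument keeps the shared part of [q]. *)
Definition binder_arg_pat (q : option kind) : option kind :=
  match q with Some KVar | Some KDown => None | o => o end.

Lemma app_split_ext q G G1 G2 :
  app_split G G1 G2 -> app_split (ext q G) (ext q G1) (ext (binder_arg_pat q) G2).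
Proof. intros H [|i]; simpl; [pattern_cases | apply H]. Qed.

Lemma der_lift_binder q Gn Q : der Gn Q -> der (ext (binder_arg_pat q) Gn) (lift 0 Q).
Proof.
  intros H. apply der_wk with (ext None Gn); [now apply der_lift0 |].
  intros [|i]; [unfold wk_pat; pattern_cases | now left].
Qed.

Lemma linear_pattern_not_discarded k p Gr x :
  p = Some KVar \/ p = Some KDown -> x <> k ->
  ~ (forall y, y <> x -> lin_ok (insert k p Gr y)).
Proof.
  intros Hp Hx H. specialize (H k (not_eq_sym Hx)). rewrite insert_at in H.
  unfold lin_ok in H; intuition congruence.
Qed.

Lemma der_subst_lin k E Gr Gn M Q :
  derI der (insert k (Some KVar) Gr) M -> app_split E Gr Gn -> der Gn Q ->
  derI der E (subst k Q M).
Proof.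
  intros H. remember (insert k (Some KVar) Gr) as Gm eqn:HG.
  revert k Gr E Gn Q HG; induction H; intros k Gr E Gn Q HG HS HQ; subst G;
    try (exfalso; destruct (bump_cases k x) as [-> | [y ->]];
         [ rewrite insert_at in H; congruence
         | exact (linear_pattern_not_discarded k _ Gr _ (or_introl eq_refl) (bump_neq k y) H0) ]).
  - destruct (bump_cases k x) as [-> | [y ->]].
    + rewrite subst_Var_at. apply der_unfold, der_wk with Gn; auto.
      intro i. apply split_at_wk_arg with (Gr i); [apply HS | apply (lin_ok_remove_at k _ _ H0)].
    + exfalso; exact (linear_pattern_not_discarded k _ Gr _ (or_introl eq_refl) (bump_neq k y) H0).
  - rewrite subst_App. apply app_split_insert in H as [Hs Hk].
    destruct (split_at_linear _ _ _ Hk (or_introl eq_refl)) as [[Hk1 Hk2] | [Hk1 Hk2]].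
    + pose proof (fun i => split_at_merge_l _ _ _ _ _ (HS i) (Hs i)) as HM.
      apply d_a with (fun i => merge_pat (Gn i) (remove k G1 i)) (remove k G2).
      * intro i; apply HM.
      * eapply IHderI1; eauto; [rewrite <- Hk1; apply insert_remove | intro i; apply HM].
      * apply der_unfold, der_strengthen. rewrite <- Hk2, <- insert_remove. now apply der_fold.
    + pose proof (fun i => split_at_merge_r _ _ _ _ _ (HS i) (Hs i)) as HM.
      apply d_a with (remove k G1) (fun i => merge_pat (Gn i) (remove k G2 i)).
      * intro i; apply HM.
      * apply der_unfold, der_strengthen. rewrite <- Hk1, <- insert_remove. now apply der_fold.
      * eapply IHderI2; eauto; [rewrite <- Hk2; apply insert_remove | intro i; apply HM].
  - rewrite subst_Lam. apply d_ll.
    eapply IHderI; eauto using ext_insert, app_split_ext, der_lift_binder.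
  - rewrite subst_LamI. apply d_li1.
    eapply IHderI; eauto using ext_insert, app_split_ext, der_lift_binder.
  - rewrite subst_LamI. apply d_li2.
    eapply IHderI; eauto using ext_insert, app_split_ext, der_lift_binder.
  - rewrite subst_LamC. apply d_lc.
    eapply IHderI; eauto using ext_insert, app_split_ext, der_lift_binder.
  - exfalso. specialize (H k). now rewrite insert_at in H.
  - exfalso. specialize (H k). now rewrite insert_at in H.
Qed.

Lemma split_at_mi e r n :
  split_at e r n -> r <> Some KVar -> n <> Some KVar ->
  split_at (mi_pat e) (mi_pat r) (mi_pat n) /\ e <> Some KVar.
Proof. pattern_cases. Qed.

Lemma der_subst_down k E Gr Gn M Q :
  derI der (insert k (Some KDown) Gr) M -> app_split E Gr Gn -> der Gn (BoxI Q) ->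
  derI der E (subst k Q M).
Proof.
  intros H. remember (insert k (Some KDown) Gr) as Gm eqn:HG.
  revert k Gr E Gn Q HG; induction H; intros k Gr E Gn Q HG HS HQ; subst G;
    try (exfalso; destruct (bump_cases k x) as [-> | [y ->]];
         [ rewrite insert_at in H; congruence
         | exact (linear_pattern_not_discarded k _ Gr _ (or_intror eq_refl) (bump_neq k y) H0) ]).
  - rewrite subst_App. apply app_split_insert in H as [Hs Hk].
    destruct (split_at_linear _ _ _ Hk (or_intror eq_refl)) as [[Hk1 Hk2] | [Hk1 Hk2]].
    + pose proof (fun i => split_at_merge_l _ _ _ _ _ (HS i) (Hs i)) as HM.
      apply d_a with (fun i => merge_pat (Gn i) (remove k G1 i)) (remove k G2).
      * intro i; apply HM.
      * eapply IHderI1; eauto; [rewrite <- Hk1; apply insert_remove | intro i; apply HM].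
      * apply der_unfold, der_strengthen. rewrite <- Hk2, <- insert_remove. now apply der_fold.
    + pose proof (fun i => split_at_merge_r _ _ _ _ _ (HS i) (Hs i)) as HM.
      apply d_a with (remove k G1) (fun i => merge_pat (Gn i) (remove k G2 i)).
      * intro i; apply HM.
      * apply der_unfold, der_strengthen. rewrite <- Hk1, <- insert_remove. now apply der_fold.
      * eapply IHderI2; eauto; [rewrite <- Hk2; apply insert_remove | intro i; apply HM].
  - rewrite subst_Lam. apply d_ll.
    eapply IHderI; eauto using ext_insert, app_split_ext.
    rewrite <- lift_BoxI. now apply der_lift_binder.
  - rewrite subst_LamI. apply d_li1.
    eapply IHderI; eauto using ext_insert, app_split_ext.
    rewrite <- lift_BoxI. now apply der_lift_binder.
  - rewrite subst_LamI. apply d_li2.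
    eapply IHderI; eauto using ext_insert, app_split_ext.
    rewrite <- lift_BoxI. now apply der_lift_binder.
  - rewrite subst_LamC. apply d_lc.
    eapply IHderI; eauto using ext_insert, app_split_ext.
    rewrite <- lift_BoxI. now apply der_lift_binder.
  - rewrite subst_BoxI. apply mi_env_inv in H as [-> H].
    apply der_unfold in HQ. inversion HQ; subst.
    apply mi_env_inv in H2 as [-> H2].
    assert (HGr : forall i, Gr i <> Some KVar)
      by (intro i; rewrite <- (insert_bump k (Some KDown) Gr i); auto).
    pose proof (fun i => split_at_mi _ _ _ (HS i) (HGr i) (H2 i)) as HM.
    apply d_mi with (mi_env_of E).
    + apply mi_env_intro; intro i; apply HM.
    + apply der_subst_lin with (mi_env_of Gr) (mi_env_of Gn).
      * now rewrite mi_env_of_insert in H0.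
      * intro i; apply HM.
      * now apply der_fold.
  - exfalso. specialize (H k). now rewrite insert_at in H.
Qed.

(** [E] is the body's environment [r] merged with the argument's environment [n] taken
    inside its [↓]-box, where the former [↓y] became [y]; these become [#y] in [E]. *)
Definition hash_merge (e r n : option kind) : Prop :=
  (n = None /\ e = r) \/ (n = Some KVar /\ r = None /\ e = Some KHash) \/
  (n = r /\ e = r /\ (n = Some KUp \/ n = Some KDag)).
Definition hash_select (n a : option kind) : option kind :=
  match n with Some KVar => Some KHash | _ => a end.

Lemma hash_merge_split e r n a b :
  hash_merge e r n -> split_at r a b ->
  split_at e (hash_select n a) (hash_select n b)
  /\ hash_merge (hash_select n a) a n /\ hash_merge (hash_select n b) b n.
Proof. unfold hash_merge, hash_select; pattern_cases. Qed.
Lemma hash_merge_wk e r n : hash_merge e r n -> lin_ok r -> wk_pat n e.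
Proof. unfold hash_merge, wk_pat; pattern_cases. Qed.
Lemma hash_merge_some e r n : hash_merge e r n -> r <> None -> e = r.
Proof. unfold hash_merge; pattern_cases. Qed.
Lemma hash_merge_lin e r n : hash_merge e r n -> lin_ok r -> lin_ok e.
Proof. unfold hash_merge; pattern_cases. Qed.
Lemma hash_merge_mi e r n :
  hash_merge e r n -> r <> Some KVar -> mi_pat e = mi_pat r /\ e <> Some KVar.
Proof. unfold hash_merge; pattern_cases. Qed.
Lemma hash_merge_mc e r n :
  hash_merge e r n -> r <> Some KVar /\ r <> Some KDown ->
  mc_pat e = mc_pat r /\ (e <> Some KVar /\ e <> Some KDown).
Proof. unfold hash_merge; pattern_cases. Qed.

Lemma hash_merge_ext E Gr Gn q :
  (forall i, hash_merge (E i) (Gr i) (Gn i)) ->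
  forall i, hash_merge (ext q E i) (ext q Gr i) (ext None Gn i).
Proof. intros HS [|i]; simpl; [now left | apply HS]. Qed.

Lemma der_subst_hash k E Gr Gn M Q :
  derI der (insert k (Some KHash) Gr) M -> (forall i, hash_merge (E i) (Gr i) (Gn i)) ->
  der Gn Q -> derI der E (subst k Q M).
Proof.
  intros H. remember (insert k (Some KHash) Gr) as Gm eqn:HG.
  revert k Gr E Gn Q HG; induction H; intros k Gr E Gn Q HG HS HQ; subst G;
    try (destruct (bump_cases k x) as [-> | [y ->]];
         [ rewrite insert_at in H; discriminate
         | rewrite subst_Var_bump, insert_bump in *; constructor;
           [ rewrite (hash_merge_some _ _ _ (HS y)); congruence
           | intros z Hz; eapply hash_merge_lin; eauto; eapply lin_ok_remove; eauto ] ]).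
  - destruct (bump_cases k x) as [-> | [y ->]].
    + rewrite subst_Var_at. apply der_unfold, der_wk with Gn; auto.
      intro i. apply hash_merge_wk with (Gr i); [apply HS | apply (lin_ok_remove_at k _ _ H0)].
    + rewrite subst_Var_bump, insert_bump in *. apply d_vd.
      * rewrite (hash_merge_some _ _ _ (HS y)); congruence.
      * intros z Hz; eapply hash_merge_lin; eauto; eapply lin_ok_remove; eauto.
  - rewrite subst_App. apply app_split_insert in H as [Hs [Hk1 Hk2]].
    pose proof (fun i => hash_merge_split _ _ _ _ _ (HS i) (Hs i)) as HM.
    apply d_a with (fun i => hash_select (Gn i) (remove k G1 i))
                   (fun i => hash_select (Gn i) (remove k G2 i)).
    + intro i; apply HM.
    + eapply IHderI1; eauto; [rewrite <- Hk1; apply insert_remove | intro i; apply HM].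
    + eapply IHderI2; eauto; [rewrite <- Hk2; apply insert_remove | intro i; apply HM].
  - rewrite subst_Lam. apply d_ll.
    eapply IHderI; eauto using ext_insert, hash_merge_ext, der_lift0.
  - rewrite subst_LamI. apply d_li1.
    eapply IHderI; eauto using ext_insert, hash_merge_ext, der_lift0.
  - rewrite subst_LamI. apply d_li2.
    eapply IHderI; eauto using ext_insert, hash_merge_ext, der_lift0.
  - rewrite subst_LamC. apply d_lc.
    eapply IHderI; eauto using ext_insert, hash_merge_ext, der_lift0.
  - rewrite subst_BoxI. apply mi_env_inv in H as [-> H].
    assert (HGr : forall i, Gr i <> Some KVar)
      by (intro i; rewrite <- (insert_bump k (Some KHash) Gr i); auto).
    pose proof (fun i => hash_merge_mi _ _ _ (HS i) (HGr i)) as HM.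
    assert (HE : mi_env_of E = mi_env_of Gr)
      by (apply functional_extensionality; intro i; apply HM).
    apply d_mi with (mi_env_of E).
    + apply mi_env_intro; intro i; apply HM.
    + rewrite HE. apply der_unfold, der_strengthen.
      rewrite mi_env_of_insert in H0. now apply der_fold.
  - rewrite subst_BoxC. apply mc_env_inv in H as [-> H].
    assert (HGr : forall i, Gr i <> Some KVar /\ Gr i <> Some KDown)
      by (intro i; rewrite <- (insert_bump k (Some KHash) Gr i); auto).
    pose proof (fun i => hash_merge_mc _ _ _ (HS i) (HGr i)) as HM.
    assert (HE : mc_env_of E = mc_env_of Gr)
      by (apply functional_extensionality; intro i; apply HM).
    apply d_mc with (mc_env_of E).
    + apply mc_env_intro; intro i; apply HM.
    + rewrite HE. apply der_strengthen. now rewrite mc_env_of_insert in H0.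
Qed.

(** * Subject reduction *)

Lemma der_App_inv G M N :
  der G (App M N) -> exists G1 G2, app_split G G1 G2 /\ der G1 M /\ der G2 N.
Proof. intros H; apply der_unfold in H; inversion H; subst. exists G1, G2; auto using der_fold. Qed.

Lemma der_Lam_inv G M : der G (Lam M) -> der (ext (Some KVar) G) M.
Proof. intros H; apply der_unfold in H; inversion H; subst; auto using der_fold. Qed.

Lemma der_LamI_inv G M :
  der G (LamI M) -> der (ext (Some KHash) G) M \/ der (ext (Some KDown) G) M.
Proof. intros H; apply der_unfold in H; inversion H; subst; auto using der_fold. Qed.

Lemma der_LamC_inv G M : der G (LamC M) -> der (ext (Some KUp) G) M.
Proof. intros H; apply der_unfold in H; inversion H; subst; auto using der_fold. Qed.

Lemma der_BoxI_inv G M :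
  der G (BoxI M) -> (forall i, G i <> Some KVar) /\ der (mi_env_of G) M.
Proof.
  intros H; apply der_unfold in H; inversion H as [| | | | | | | | ? ? ? HMI HM |]; subst.
  apply mi_env_inv in HMI as [-> HG]. auto using der_fold.
Qed.

Lemma der_BoxC_inv G M :
  der G (BoxC M) -> (forall i, G i <> Some KVar /\ G i <> Some KDown) /\ der (mc_env_of G) M.
Proof.
  intros H; apply der_unfold in H; inversion H as [| | | | | | | | | ? ? ? HMC HM]; subst.
  apply mc_env_inv in HMC as [-> HG]. auto.
Qed.

(** [env_prec G D] is convertible to [forall i, prec_pat (G i) (D i)]. *)
Definition prec_pat (g d : option kind) : Prop := d = g \/ (g = Some KDown /\ d = Some KHash).

Lemma env_prec_refl G : env_prec G G.
Proof. intro i; now left. Qed.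

(** [↓y] of the argument of a [λ↓]-redex with bound [#x] becomes [#y]. *)
Definition hash_arg_pat (g g2 : option kind) : option kind :=
  match g2 with Some KDown => Some KHash | _ => g end.

Lemma split_at_hash_arg g g1 g2 :
  split_at g g1 g2 -> g2 <> Some KVar ->
  hash_merge (hash_arg_pat g g2) g1 (mi_pat g2) /\ prec_pat g (hash_arg_pat g g2).
Proof. unfold hash_merge, prec_pat, hash_arg_pat; pattern_cases. Qed.

Lemma split_at_boxC_arg g g1 g2 :
  split_at g g1 g2 -> g2 <> Some KVar /\ g2 <> Some KDown ->
  g = g1 /\ (mc_pat g2 = None \/ (mc_pat g2 = Some KDag /\ dag_covered (Some KUp) g1)).
Proof. unfold dag_covered; pattern_cases. Qed.

Lemma basic_subject_reduction G L P :
  der G L -> basic L P -> exists D, env_prec G D /\ der D P.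
Proof.
  intros H B; destruct B; apply der_App_inv in H as [G1 [G2 [HA [HL HN]]]].
  - exists G; split; [apply env_prec_refl |].
    apply der_fold. eapply der_subst_lin; eauto.
    rewrite insert0. now apply der_unfold, der_Lam_inv.
  - destruct (der_BoxI_inv _ _ HN) as [H2 HQ].
    apply der_LamI_inv in HL as [HL | HL].
    + pose proof (fun i => split_at_hash_arg _ _ _ (HA i) (H2 i)) as HH.
      exists (fun i => hash_arg_pat (G i) (G2 i)); split; [intro i; apply HH |].
      apply der_fold. apply der_subst_hash with G1 (mi_env_of G2); auto.
      * rewrite insert0. now apply der_unfold.
      * intro i; apply HH.
    + exists G; split; [apply env_prec_refl |].
      apply der_fold. eapply der_subst_down; eauto.
      rewrite insert0. now apply der_unfold.
  - apply der_BoxC_inv in HN as [H2 HN]. apply der_LamC_inv in HL.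
    pose proof (fun i => split_at_boxC_arg _ _ _ (HA i) (H2 i)) as HC.
    exists G; split; [apply env_prec_refl |].
    replace G with G1 by (apply functional_extensionality; intro i; symmetry; apply HC).
    apply der_subst_shared with (k := 0) (p := Some KUp) (Gd := mc_env_of G2).
    + now rewrite insert0.
    + right; now left.
    + auto.
    + intro i; apply HC.
Qed.

(** [≺]-steps of one premise of (a), copied onto the shared [#]-patterns of the other. *)
Definition prec_copy (g g1 d1 : option kind) : option kind :=
  match g1, d1 with Some KDown, Some KHash => Some KHash | _, _ => g end.

Lemma split_at_prec_l g g1 g2 d1 :
  split_at g g1 g2 -> prec_pat g1 d1 ->
  split_at (prec_copy g g1 d1) d1 (prec_copy g2 g1 d1)
  /\ wk_pat g2 (prec_copy g2 g1 d1) /\ prec_pat g (prec_copy g g1 d1).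
Proof. unfold prec_pat, wk_pat, prec_copy; pattern_cases. Qed.

Lemma split_at_prec_r g g1 g2 d2 :
  split_at g g1 g2 -> prec_pat g2 d2 ->
  split_at (prec_copy g g2 d2) (prec_copy g1 g2 d2) d2
  /\ wk_pat g1 (prec_copy g1 g2 d2) /\ prec_pat g (prec_copy g g2 d2).
Proof. unfold prec_pat, wk_pat, prec_copy; pattern_cases. Qed.

Lemma env_prec_no_down G D : (forall i, G i <> Some KDown) -> env_prec G D -> D = G.
Proof.
  intros H1 H2; apply functional_extensionality; intro i.
  destruct (H2 i) as [| []]; auto. exfalso; eapply H1; eauto.
Qed.

Lemma env_prec_mi G D : env_prec (mi_env_of G) D -> D = mi_env_of G.
Proof.
  apply env_prec_no_down. intro i; unfold mi_env_of; destruct (G i) as [[]|]; simpl; congruence.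
Qed.

Lemma env_prec_mc G D :
  (forall i, G i <> Some KVar /\ G i <> Some KDown) -> env_prec (mc_env_of G) D -> D = mc_env_of G.
Proof.
  intros HG; apply env_prec_no_down. intro i; unfold mc_env_of; specialize (HG i).
  destruct (G i) as [[]|]; simpl; intuition congruence.
Qed.

Lemma der_App_prec_l G G1 G2 D1 M N :
  app_split G G1 G2 -> env_prec G1 D1 -> der D1 M -> der G2 N ->
  exists D, env_prec G D /\ der D (App M N).
Proof.
  intros HA HD1 HM HN.
  pose proof (fun i => split_at_prec_l _ _ _ _ (HA i) (HD1 i)) as HP.
  exists (fun i => prec_copy (G i) (G1 i) (D1 i)); split; [intro i; apply HP |].
  apply der_fold, d_a with D1 (fun i => prec_copy (G2 i) (G1 i) (D1 i)).
  - intro i; apply HP.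
  - now apply der_unfold.
  - apply der_unfold, der_wk with G2; auto. intro i; apply HP.
Qed.

Lemma der_App_prec_r G G1 G2 D2 M N :
  app_split G G1 G2 -> der G1 M -> env_prec G2 D2 -> der D2 N ->
  exists D, env_prec G D /\ der D (App M N).
Proof.
  intros HA HM HD2 HN.
  pose proof (fun i => split_at_prec_r _ _ _ _ (HA i) (HD2 i)) as HP.
  exists (fun i => prec_copy (G i) (G2 i) (D2 i)); split; [intro i; apply HP |].
  apply der_fold, d_a with (fun i => prec_copy (G1 i) (G2 i) (D2 i)) D2.
  - intro i; apply HP.
  - apply der_unfold, der_wk with G1; auto. intro i; apply HP.
  - now apply der_unfold.
Qed.

Lemma env_prec_ext q G D :
  env_prec (ext q G) D ->
  env_prec G (fun i => D (S i)) /\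
  (D = ext q (fun i => D (S i)) \/
   (q = Some KDown /\ D = ext (Some KHash) (fun i => D (S i)))).
Proof.
  intros H. split; [intro i; apply (H (S i)) |].
  destruct (H 0) as [E | [E1 E2]]; simpl in *; [left | right; split; auto];
    apply functional_extensionality; intros [|i]; auto.
Qed.

Section PlugSubjectReduction.

Variables L P : term.
Hypothesis reduce_hole : forall G, der G L -> exists D, env_prec G D /\ der D P.

Lemma plug_subject_reduction C G :
  der G (plug C L) -> exists D, env_prec G D /\ der D (plug C P).
Proof.
  revert G; induction C; intros G H; simpl in *; auto.
  - apply der_App_inv in H as [G1 [G2 [HA [HL HN]]]].
    destruct (IHC G1 HL) as [D1 [HD1 HC]]. eapply der_App_prec_l; eauto.
  - apply der_App_inv in H as [G1 [G2 [HA [HL HN]]]].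
    destruct (IHC G2 HN) as [D2 [HD2 HC]]. eapply der_App_prec_r; eauto.
  - apply der_Lam_inv, IHC in H as [D [HD HC]].
    apply env_prec_ext in HD as [HD [E | [E _]]]; [| discriminate].
    exists (fun i => D (S i)); split; auto.
    apply der_fold, d_ll. rewrite <- E. now apply der_unfold.
  - apply der_LamI_inv in H as [H | H]; apply IHC in H as [D [HD HC]];
      apply env_prec_ext in HD as [HD [E | [Hq E]]]; try discriminate;
      exists (fun i => D (S i)); split; auto; apply der_fold.
    + apply d_li1. rewrite <- E. now apply der_unfold.
    + apply d_li2. rewrite <- E. now apply der_unfold.
    + apply d_li1. rewrite <- E. now apply der_unfold.
  - apply der_LamC_inv, IHC in H as [D [HD HC]].
    apply env_prec_ext in HD as [HD [E | [E _]]]; [| discriminate].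
    exists (fun i => D (S i)); split; auto.
    apply der_fold, d_lc. rewrite <- E. now apply der_unfold.
  - apply der_BoxI_inv in H as [HG H]. apply IHC in H as [D [HD HC]].
    apply env_prec_mi in HD; subst D.
    exists G; split; [apply env_prec_refl |].
    apply der_fold, d_mi with (mi_env_of G); [now apply mi_env_intro | now apply der_unfold].
  - apply der_BoxC_inv in H as [HG H]. apply IHC in H as [D [HD HC]].
    apply env_prec_mc in HD; auto; subst D.
    exists G; split; [apply env_prec_refl |].
    apply der_fold, d_mc with (mc_env_of G); auto. now apply mc_env_intro.
Qed.

End PlugSubjectReduction.

Theorem mainTheorem11 (G : env) (M N : term) :
  env_finite G -> der G M -> red M N ->
  exists D : env, env_prec G D /\ der D N.
Proof.
  intros _ H [C [L [P [B [HM HN]]]]].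
  apply der_bisim with (M' := plug C L) in H; auto.
  destruct (plug_subject_reduction L P (fun G0 HG0 => basic_subject_reduction G0 L P HG0 B) C G H)
    as [D [HD HD']].
  exists D; split; auto.
  apply der_bisim with (plug C P); auto. now apply bisim_sym.
Qed.
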